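(* Let $G$ be a graph on $n$ vertices belonging to $\mathcal{H}_7^{+}$, and let $\alpha$ be its corner rank. Then (i) $G^{(\alpha-3)}$ is (isomorphic to) $H_7$; (ii) $G$ is of type 1; (iii) the capture time of $G$ is $n-4$.
   Context: All graphs are finite, nonempty, and reflexive (every vertex has a loop). $N[v]$ is the closed neighborhood of $v$ (including $v$). For distinct $v,w$, $w$ strictly corners $v$ if $N[v]\subsetneq N[w]$; $v$ is then a strict corner. A vertex dominates a set if adjacent to all its vertices. Corner ranking: set $G^{(1)}=G$, $k=1$. If $G^{(k)}$ is a clique, give all its vertices rank $k$ and stop. Else if $G^{(k)}$ has no strict corners, give all its vertices rank $\infty$ and stop. Else give every strict corner of $G^{(k)}$ rank $k$, delete them to get $G^{(k+1)}$ (induced subgraph), increase $k$ and repeat. The corner rank is the largest rank of a vertex; $X_k$ is the set of rank-$k$ vertices. A graph of finite corner rank $\alpha\ge2$ is of type 1 if some (equivalently every) vertex of rank $\alpha$ dominates $V(G^{(\alpha-1)})$, and of type 0 otherwise. Cops and robbers: a cop chooses a vertex, then the robber; they alternate moves, cop first, moving to an adjacent vertex or staying; the cop wins upon occupying the robber's vertex. $G$ is cop-win if the cop can force a win; its capture time is the minimum number of cop moves (not counting initial placement) that guarantees capture. (Known: $G$ is cop-win iff its corner rank is finite, and a type-$r$ graph of corner rank $\alpha$ has capture time $\alpha-r$.) The rank cardinality vector of $G$ is $(x_\alpha,\dots,x_1)$ with $x_k=|X_k|$; $G$ realizes it. $H_7$ is the graph on $a_1,a_2,b_1,b_2,c_1,c_2,d$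 with edges $a_1a_2,a_1b_1,a_1b_2,a_2b_1,a_2b_2,a_2c_1,a_1c_2,b_1c_1,b_1c_2,b_1d,b_2c_1,b_2c_2,c_1d,c_2d$. For $k\ge0$, $\mathcal{H}_7^{+k}$ is the set of cop-win graphs realizing the vector $(2,2,2,1,\dots,1)$ of length $4+k$, and $\mathcal{H}_7^+=\bigcup_{k\ge0}\mathcal{H}_7^{+k}$. *)

From mathcomp Require Import all_boot.
Set Implicit Arguments. Unset Strict Implicit. Unset Printing Implicit Defensive.

(* A graph is given by a finite vertex type T and an adjacency relation
   e : rel T, assumed reflexive (loops) and symmetric in the theorem.
   Induced subgraphs are represented by vertex sets S : {set T}. *)
Section Graphs.
Variables (T : finType) (e : rel T).

Definition nbhd (S : {set T}) (v : T) : {set T} := [set w in S | e v w].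

Definition strict_corner (S : {set T}) (v : T) : bool :=
  (v \in S) && [exists w in S, (w != v) && (nbhd S v \proper nbhd S w)].

Definition corners (S : {set T}) : {set T} := [set v | strict_corner S v].

Definition is_clique (S : {set T}) : bool :=
  [forall x in S, forall y in S, e x y].

Definition corner_step (S : {set T}) : {set T} := S :\: corners S.

(* G^(k), for k >= 1:  G^(1) = V(G), G^(k+1) = G^(k) minus its strict corners *)
Definition Gk (k : nat) : {set T} := iter k.-1 corner_step [set: T].

Definition corner_rank (alpha : nat) : Prop :=
  1 <= alpha /\ is_clique (Gk alpha) /\
  (forall j, 1 <= j -> j < alpha -> ~~ is_clique (Gk j)).

Definition Xk (alpha j : nat) : {set T} :=
  if (1 <= j) && (j < alpha) then corners (Gk j)
  else if j == alpha then Gk alpha else set0.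

Definition rank_card_vector (alpha : nat) : seq nat :=
  [seq #|Xk alpha j| | j <- rev (iota 1 alpha)].

Definition realizes (v : seq nat) : Prop :=
  exists alpha, corner_rank alpha /\ rank_card_vector alpha = v.

Definition type1 (alpha : nat) : Prop :=
  2 <= alpha /\
  exists2 v, v \in Xk alpha alpha & {in Gk alpha.-1, forall u, e v u}.

(* Cops and robbers: cop_wins m c r  <=> cop at c, robber at r, cop to move,
   the cop can force capture within m more cop moves. *)
Fixpoint cop_wins (m : nat) (c r : T) : bool :=
  if m is m'.+1 then
    (c == r) || [exists c', e c c' &&
        ((c' == r) || [forall r', e r r' ==> cop_wins m' c' r'])]
  else c == r.

Definition capture_within (m : nat) : Prop :=
  exists c0, forall r0, cop_wins m c0 r0.

Definition capture_time (m : nat) : Prop :=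
  capture_within m /\ forall m', m' < m -> ~ capture_within m'.

End Graphs.

(* H_7 on 'I_7 : a1=0, a2=1, b1=2, b2=3, c1=4, c2=5, d=6 *)
Definition H7_edges : seq (nat * nat) :=
  [:: (0,1); (0,2); (0,3); (1,2); (1,3); (1,4); (0,5);
      (2,4); (2,5); (2,6); (3,4); (3,5); (4,6); (5,6)].

Definition H7 : rel 'I_7 := fun i j =>
  (i == j) || ((val i, val j) \in H7_edges) || ((val j, val i) \in H7_edges).

Definition induced_iso (T U : finType) (e : rel T) (S : {set T}) (h : rel U) : Prop :=
  exists g : U -> T, [/\ injective g, [set g i | i : U] = S &
                        forall i j, e (g i) (g j) = h i j].

Definition in_H7plusk (T : finType) (e : rel T) (k : nat) : Prop :=
  realizes e ([:: 2; 2; 2] ++ nseq k.+1 1).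

Definition in_H7plus (T : finType) (e : rel T) : Prop :=
  exists k, in_H7plusk e k.

(* The rank vector (2,2,2,1,...,1) of length k+4 forces corner rank alpha = k+4,
   n = alpha+3, and layers G^(alpha), G^(alpha-1), G^(alpha-2), G^(alpha-3) of sizes
   2, 4, 6, 7.  Listing the seven vertices of G^(alpha-3) layer by layer reduces (i) and
   (ii) to a finite statement about graphs on {0,...,6}, settled by an exhaustive search
   pruned layer by layer: such a graph is H_7, and one of its two top vertices dominates
   the four vertices of G^(alpha-1).

   For (iii), a type-1 graph of corner rank alpha >= 3 has capture time alpha-1.  Sending
   each strict corner of G^(k) to a dominating vertex with largest neighbourhood is a
   retraction of G^(k) onto G^(k+1).  The cop wins by chasing the robber's image under
   these retractions, one layer per move, and the robber survives alpha-2 moves by staying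
   off the neighbourhood of the cop's image, which is possible because G^(alpha-1) is not
   a clique. *)

From mathcomp Require Import all_boot zify.
Set Implicit Arguments. Unset Strict Implicit. Unset Printing Implicit Defensive.

Section CopWins.
Variable T : finType.

Lemma eq_cop_wins (e1 e2 : rel T) : e1 =2 e2 ->
  forall m c r, cop_wins e1 m c r = cop_wins e2 m c r.
Proof.
move=> e12; elim=> [//|m IH] c r /=.
congr (_ || _); apply: eq_existsb => c'; rewrite e12; congr (_ && (_ || _)).
by apply: eq_forallb => r'; rewrite e12 IH.
Qed.

Lemma cop_winsS (e : rel T) m c r : cop_wins e m c r -> cop_wins e m.+1 c r.
Proof.
elim: m c r => [|m IH] c r /=; first by move=> ->.
case/orP=> [->//|/existsP [c' /andP [ecc' win]]].
apply/orP; right; apply/existsP; exists c'; rewrite ecc' /=.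
case/orP: win => [->//|/forallP win]; apply/orP; right.
by apply/forallP => r'; apply/implyP => err'; apply: IH; exact: (implyP (win r')).
Qed.

Lemma cop_wins_le (e : rel T) m n c r : m <= n -> cop_wins e m c r -> cop_wins e n c r.
Proof.
move=> /subnKC <-; elim: (n - m) => [|d IH]; first by rewrite addn0.
by move=> win; rewrite addnS; apply/cop_winsS/IH.
Qed.

End CopWins.

Section Dismantling.
Variables (T : finType) (e : rel T).
Hypotheses (e_refl : reflexive e) (e_sym : symmetric e).
Implicit Types (S : {set T}) (x y z r c : T).

Lemma in_nbhd S v w : (w \in nbhd e S v) = (w \in S) && e v w.
Proof. by rewrite inE. Qed.

Lemma corner_step_sub S : corner_step e S \subset S.
Proof. exact: subsetDl. Qed.

Lemma in_corner_step S x :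
  (x \in corner_step e S) = (x \in S) && ~~ strict_corner e S x.
Proof. by rewrite !inE andbC. Qed.

Lemma non_corner_nbhd_eq S r w : r \in corner_step e S -> w \in S -> w != r ->
  nbhd e S r \subset nbhd e S w -> nbhd e S w = nbhd e S r.
Proof.
rewrite in_corner_step => /andP [rS not_corner] wS wr sub_rw.
apply/eqP; rewrite eqEsubset andbC; apply/andP; split=> //.
apply: contraR not_corner => not_sub; rewrite /strict_corner rS /=.
by apply/existsP; exists w; rewrite wS wr properE sub_rw.
Qed.

Lemma dominated_clique S y : y \in S -> {in S, forall z, e y z} ->
  is_clique e (corner_step e S).
Proof.
move=> yS ydom; apply/forallP => x; apply/implyP => xC.
apply/forallP => z; apply/implyP => zC.
have [xS zS] := (subsetP (corner_step_sub S) x xC, subsetP (corner_step_sub S) z zC).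
have [<-|yx] := eqVneq y x; first exact: ydom.
have sub_xy : nbhd e S x \subset nbhd e S y.
  by apply/subsetP => w; rewrite !in_nbhd => /andP [wS _]; rewrite wS ydom.
have := non_corner_nbhd_eq xC yS yx sub_xy.
by move/setP/(_ z); rewrite !in_nbhd zS ydom.
Qed.

(* A dominating vertex with a largest neighbourhood is not itself a strict corner. *)
Definition dominator S x : T :=
  [arg max_(w > x | (w \in S) && (nbhd e S x \subset nbhd e S w)) #|nbhd e S w|].

Definition retract S x : T := if strict_corner e S x then dominator S x else x.

Lemma dominatorP S x : x \in S ->
  [/\ dominator S x \in S, nbhd e S x \subset nbhd e S (dominator S x) &
      forall w, w \in S -> nbhd e S x \subset nbhd e S w ->
        #|nbhd e S w| <= #|nbhd e S (dominator S x)| ].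
Proof.
move=> xS; rewrite /dominator; case: arg_maxnP; first by rewrite xS subxx.
by move=> w /andP [wS sub_xw] wmax; split=> // w' w'S sub_xw'; apply: wmax; rewrite w'S.
Qed.

Lemma retract_step S x : x \in S -> retract S x \in corner_step e S.
Proof.
move=> xS; rewrite /retract; case: ifP => [_|xC]; last by rewrite in_corner_step xS xC.
have [wS sub_xw wmax] := dominatorP xS.
rewrite in_corner_step wS /=; apply/negP => /andP [_ /existsP [w' /and3P [w'S _ lt_ww']]].
have := wmax w' w'S (subset_trans sub_xw (proper_sub lt_ww')).
by rewrite leqNgt proper_card.
Qed.

Lemma retract_in S x : x \in S -> retract S x \in S.
Proof. by move/retract_step; apply/subsetP/corner_step_sub. Qed.

Lemma retract_nbhd S x : x \in S -> nbhd e S x \subset nbhd e S (retract S x).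
Proof. by move=> xS; rewrite /retract; case: ifP => //; case: (dominatorP xS). Qed.

Lemma retract_id S x : x \in corner_step e S -> retract S x = x.
Proof. by rewrite in_corner_step /retract => /andP [_ /negbTE ->]. Qed.

Lemma retract_adj S x y : x \in S -> y \in S -> e x y -> e (retract S x) y.
Proof.
move=> xS yS exy; have := subsetP (retract_nbhd xS) y.
by rewrite !in_nbhd yS exy => /(_ isT) /andP [].
Qed.

Lemma retract_hom S x y : x \in S -> y \in S -> e x y -> e (retract S x) (retract S y).
Proof.
move=> xS yS exy; rewrite e_sym retract_adj ?retract_in //.
by rewrite e_sym retract_adj.
Qed.

(* [layer i] is G^(i+1), i.e. [Gk e i.+1]. *)
Definition layer i : {set T} := iter i (corner_step e) [set: T].

Lemma layerS i : layer i.+1 = corner_step e (layer i).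
Proof. by []. Qed.

Lemma layer_sub i j : i <= j -> layer j \subset layer i.
Proof.
move=> /subnKC <-; elim: (j - i) => [|d IH]; first by rewrite addn0.
by rewrite addnS layerS; apply: subset_trans IH; apply: corner_step_sub.
Qed.

Fixpoint shadow i x : T := if i is i'.+1 then retract (layer i') (shadow i' x) else x.

Lemma shadow_in i x : shadow i x \in layer i.
Proof. by elim: i => [|i IH]; [rewrite inE | exact: retract_step]. Qed.

Lemma shadow_id i x : x \in layer i -> shadow i x = x.
Proof.
elim: i => [//|i IH] xL /=.
by rewrite IH ?retract_id //; apply: subsetP xL; apply: layer_sub.
Qed.

Lemma shadow_hom i x y : e x y -> e (shadow i x) (shadow i y).
Proof. by elim: i => [//|i IH] /= /IH; apply: retract_hom; apply: shadow_in. Qed.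

Definition induced S : rel T := fun x y => [&& x \in S, y \in S & e x y].

Lemma cop_wins_adj S m c r : c \in S -> r \in S -> e c r ->
  cop_wins (induced S) m.+1 c r.
Proof.
move=> cS rS ecr; apply/orP; right; apply/existsP; exists r.
by rewrite /induced cS rS ecr eqxx.
Qed.

(* The cop chases the image of the robber under the retraction; once it is
   caught, the robber is adjacent to the cop. *)
Lemma cop_wins_retract S m c r : c \in corner_step e S -> r \in S ->
  cop_wins (induced (corner_step e S)) m c (retract S r) ->
  cop_wins (induced S) m.+1 c r.
Proof.
have sub := subsetP (corner_step_sub S).
have catch m' r' : r' \in S -> cop_wins (induced S) m'.+1 (retract S r') r'.
  by move=> r'S; apply: cop_wins_adj; rewrite ?retract_in ?retract_adj.
elim: m c r => [|m IH] c r cC rS; first by move/eqP ->; apply: catch.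
case/orP=> [/eqP ->|/existsP [c' /andP [/and3P [_ c'C ecc'] win]]]; first exact: catch.
apply/orP; right; apply/existsP; exists c'; apply/andP; split.
  by rewrite /induced (sub c) ?(sub c') ?ecc'.
apply/orP; right; apply/forallP => r'; apply/implyP => /and3P [_ r'S err'].
case/orP: win => [/eqP c'r|/forallP win].
  by apply: cop_wins_adj; [exact: sub | | rewrite c'r retract_adj].

apply: IH => //; apply: (implyP (win _)).
by rewrite /induced !retract_step ?retract_hom.
Qed.

Lemma exists_escape S r x y : r \in corner_step e S -> x \in S -> y \in S ->
  e y (retract S x) -> ~~ e y r -> exists2 r', r' \in S & e r r' && ~~ e x r'.
Proof.
move=> rC xS yS eyx not_eyr.
case: (pickP [pred r' | [&& r' \in S, e r r' & ~~ e x r']]) => [r' /and3P [] | none].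
  by exists r' => //; apply/andP.
have sub_rx : nbhd e S r \subset nbhd e S (retract S x).
  apply: subset_trans (retract_nbhd xS); apply/subsetP => z; rewrite !in_nbhd.
  by case/andP=> zS erz; have := none z; rewrite /= zS erz /= => /negbFE ->.
have [xr|xr] := eqVneq (retract S x) r; first by rewrite -xr eyx in not_eyr.
have := non_corner_nbhd_eq rC (retract_in xS) xr sub_rx.
move/setP/(_ y); rewrite !in_nbhd yS e_sym eyx e_sym => /esym.
by rewrite (negbTE not_eyr).
Qed.

Lemma robber_survives i c r : r \in layer i -> ~~ e (shadow i c) r ->
  ~~ cop_wins e i.+1 c r.
Proof.
elim: i c r => [|i IH] c r rL not_adj.
  apply/negP => /orP [/eqP cr|/existsP [c' /andP [ecc' /orP [/eqP c'r|/forallP win]]]].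
  - by rewrite cr e_refl in not_adj.
  - by rewrite -c'r ecc' in not_adj.
  - by have := implyP (win r) (e_refl r) => /eqP c'r; rewrite -c'r ecc' in not_adj.
have rr : shadow i.+1 r = r by apply: shadow_id.
apply/negP => /orP [/eqP cr|/existsP [c' /andP [ecc' win]]].
  by rewrite cr rr e_refl in not_adj.
have adj_cc' := shadow_hom i.+1 ecc'.
case/orP: win => [/eqP c'r|/forallP win]; first by rewrite c'r rr (negbTE not_adj) in adj_cc'.
have cL : shadow i.+1 c \in layer i by apply: subsetP (shadow_in _ _); apply: layer_sub.
have [r' r'L /andP [err' not_adj']] := exists_escape rL (shadow_in i c') cL adj_cc' not_adj.
by have := IH c' r' r'L not_adj'; rewrite [cop_wins _ _ _ _](implyP (win r') err').
Qed.

Lemma capture_within_dominating k v : v \in layer k ->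
  {in layer k, forall u, e v u} -> capture_within e k.+1.
Proof.
move=> vL vdom.
have win d r : d <= k -> r \in layer (k - d) ->
    cop_wins (induced (layer (k - d))) d.+1 v r.
  elim: d r => [|d IH] r le_dk rL.
    by rewrite subn0 in rL *; apply: cop_wins_adj => //; apply: vdom.
  have layer_eq : layer (k - d) = corner_step e (layer (k - d.+1)).
    by rewrite -layerS; congr layer; lia.
  apply: cop_wins_retract => //.
    by rewrite -layer_eq; apply: subsetP vL; apply: layer_sub; lia.
  by rewrite -layer_eq; apply: IH; [lia | rewrite layer_eq retract_step].
exists v => r; have := win k r (leqnn k); rewrite subnn inE => /(_ isT).
by rewrite (@eq_cop_wins _ _ e) // => x y; rewrite /induced !inE.
Qed.

Lemma no_capture_within k : ~~ is_clique e (layer k.+1) -> ~ capture_within e k.+1.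
Proof.
move=> not_clique [c win].
have [r /andP [rL not_adj]] : exists r, (r \in layer k) && ~~ e (shadow k c) r.
  apply/existsP; apply: contraR not_clique => /existsPn all_adj.
  apply: (dominated_clique (shadow_in k c)) => z zL.
  by have := all_adj z; rewrite zL negbK.
by have := robber_survives rL not_adj; rewrite win.
Qed.

Lemma capture_time_type1 alpha v : corner_rank e alpha -> 3 <= alpha ->
  v \in Gk e alpha -> {in Gk e alpha.-1, forall u, e v u} ->
  capture_time e alpha.-1.
Proof.
move=> [_ [_ not_clique]] alpha_ge3 vG vdom.
have [j alpha_eq] : exists j, alpha = j.+3 by exists (alpha - 3); lia.
subst alpha; split.
  by apply: (capture_within_dominating _ vdom); apply: (subsetP (layer_sub (leqnSn _))).
move=> m lt_m [c win]; apply: (no_capture_within (k := j)); first exact: (not_clique j.+2).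
by exists c => r; apply: cop_wins_le (win r); lia.
Qed.

End Dismantling.

Section RankCardinalities.
Variables (T : finType) (e : rel T).

Lemma corner_rank_uniq a b : corner_rank e a -> corner_rank e b -> a = b.
Proof.
move=> [a_gt0 [a_clique a_min]] [b_gt0 [b_clique b_min]].
case: (ltngtP a b) => // [lt_ab|lt_ba].
  by have := b_min a a_gt0 lt_ab; rewrite a_clique.
by have := a_min b b_gt0 lt_ba; rewrite b_clique.
Qed.

Lemma GkS j : 0 < j -> Gk e j.+1 = corner_step e (Gk e j).
Proof. by case: j. Qed.

Lemma Xk_top alpha : Xk e alpha alpha = Gk e alpha.
Proof. by rewrite /Xk ltnn andbF eqxx. Qed.

Lemma Xk_corners alpha j : 0 < j < alpha -> Xk e alpha j = corners e (Gk e j).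
Proof. by rewrite /Xk => ->. Qed.

Lemma card_corner_step (S : {set T}) : #|S| = #|corner_step e S| + #|corners e S|.
Proof.
have corners_sub : corners e S \subset S.
  by apply/subsetP => x; rewrite inE => /andP [].
by rewrite cardsD (setIidPr corners_sub) subnK // subset_leq_card.
Qed.

Lemma size_rank_card_vector alpha : size (rank_card_vector e alpha) = alpha.
Proof. by rewrite size_map size_rev size_iota. Qed.

Lemma nth_rank_card_vector alpha p : p < alpha ->
  nth 0 (rank_card_vector e alpha) p = #|Xk e alpha (alpha - p)|.
Proof.
move=> lt_p; rewrite (nth_map 0) ?size_rev ?size_iota // nth_rev ?size_iota //.
by rewrite nth_iota; [congr #|Xk _ _ _|; lia | lia].
Qed.

Lemma card_Gk alpha p : corner_rank e alpha -> p < alpha ->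
  #|Gk e (alpha - p)| = sumn (take p.+1 (rank_card_vector e alpha)).
Proof.
move=> [alpha_gt0 _].
elim: p => [|p IH] lt_p; rewrite (take_nth 0) ?size_rank_card_vector //.
  by rewrite take0 /= addn0 nth_rank_card_vector // subn0 Xk_top.
rewrite sumn_rcons -IH 1?ltnW // nth_rank_card_vector // Xk_corners; last lia.
rewrite (card_corner_step (Gk e _)) -GkS; last lia.
by congr (#|Gk e _| + _); lia.
Qed.

Lemma H7plus_rank k alpha : in_H7plusk e k -> corner_rank e alpha -> alpha = k.+4.
Proof.
move=> [beta [rank_beta vec]] rank_alpha.
have := congr1 size vec; rewrite size_rank_card_vector size_cat size_nseq.
by rewrite (corner_rank_uniq rank_alpha rank_beta).
Qed.

Lemma H7plus_layer_cards k : in_H7plusk e k -> corner_rank e k.+4 ->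
  [/\ #|T| = k + 7, #|Gk e k.+4| = 2, #|Gk e k.+3| = 4, #|Gk e k.+2| = 6
    & #|Gk e k.+1| = 7].
Proof.
move=> H7k rank_k; have [beta [rank_beta vec]] := H7k.
rewrite (H7plus_rank H7k rank_beta) in vec.
have card p := card_Gk (p := p) rank_k; rewrite vec in card.
split.
- have := card k.+3 (ltnSn _); rewrite subSnn -[Gk e 1]/[set: T] cardsT => ->.
  by rewrite take_oversize ?size_cat ?size_nseq // sumn_cat sumn_nseq /=; lia.
- by change (#|Gk e (k.+4 - 0)| = 2); rewrite card.
- by change (#|Gk e (k.+4 - 1)| = 4); rewrite card.
- by change (#|Gk e (k.+4 - 2)| = 6); rewrite card.
- by change (#|Gk e (k.+4 - 3)| = 7); rewrite card //= take0.
Qed.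

End RankCardinalities.

Section SevenVertexSearch.
Implicit Types (a : nat -> nat -> bool) (l : bitseq).

Definition vertex_pairs : seq (nat * nat) := [seq (i, j) | j <- iota 1 6, i <- iota 0 j].

Definition graph_of_bits l i j : bool :=
  (i == j) || nth false l (index (minn i j, maxn i j) vertex_pairs).

Fixpoint bitseqs n : seq bitseq :=
  if n is n'.+1 then [seq b :: l | b <- [:: true; false], l <- bitseqs n'] else [:: [::]].

Definition nbhd_seq a n v : seq nat := [seq w <- iota 0 n | a v w].

Definition sub_nbhd a n v w : bool :=
  all (fun z => z \in nbhd_seq a n w) (nbhd_seq a n v).

Definition strict_corner_seq a n v : bool :=
  (v < n) && has (fun w => [&& w != v, sub_nbhd a n v w & ~~ sub_nbhd a n w v]) (iota 0 n).

Definition corner_step_prefixb a n m : bool :=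
  all (fun i => ((i < n) && ~~ strict_corner_seq a n i) == (i < m)) (iota 0 7).

(* H_7's vertices a_i, b_i, c_i, d are sent to the positions {0,1}, {2,3}, {4,5}, {6}. *)
Definition H7_labellings : seq (seq nat) :=
  [seq [:: 0; 1; b; 5 - b; c; 9 - c; 6] | b <- [:: 2; 3], c <- [:: 4; 5]].

Definition H7_nat i j : bool :=
  (i == j) || ((i, j) \in H7_edges) || ((j, i) \in H7_edges).

Definition H7_flag a : bool :=
  has (fun m => all (fun i => all (fun j =>
    a (nth 0 m i) (nth 0 m j) == H7_nat i j) (iota 0 7)) (iota 0 7)) H7_labellings
  && has (fun v => all (a v) (iota 0 4)) (iota 0 2).

(* The first 6, 9 and 6 bits code the pairs inside {0,...,3}, the pairs
   reaching 4 or 5, and those reaching 6, so the search is pruned layer by layer. *)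
Definition flag_search : bool :=
  all (fun l1 => if nth false l1 0 && corner_step_prefixb (graph_of_bits l1) 4 2 then
    all (fun l2 => if corner_step_prefixb (graph_of_bits (l1 ++ l2)) 6 4 then
      all (fun l3 => let a := graph_of_bits (l1 ++ l2 ++ l3) in
        if corner_step_prefixb a 7 6 then H7_flag a else true) (bitseqs 6)
    else true) (bitseqs 9)
  else true) (bitseqs 6).

Lemma flag_search_ok : flag_search.
Proof. by vm_compute. Qed.

Lemma mem_bitseqs n l : size l = n -> l \in bitseqs n.
Proof.
elim: n l => [|n IH] [|b l] // [size_l].
by apply: (allpairs_f (fun b l => b :: l)); [case: b | exact: IH].
Qed.

Lemma strict_corner_seq_ext a a' n v : {in gtn n &, a =2 a'} ->
  strict_corner_seq a n v = strict_corner_seq a' n v.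
Proof.
move=> aa'; rewrite /strict_corner_seq; case: ltnP => //= lt_vn.
have nbhd_eq w : w < n -> nbhd_seq a n w = nbhd_seq a' n w.
  move=> lt_wn; apply: eq_in_filter => z; rewrite mem_iota => /andP [_ lt_zn].
  exact: aa'.
apply: eq_in_has => w; rewrite mem_iota => /andP [_ lt_wn].
by rewrite /sub_nbhd !nbhd_eq.
Qed.

Lemma corner_step_prefixb_ext a a' n m : {in gtn n &, a =2 a'} ->
  corner_step_prefixb a n m = corner_step_prefixb a' n m.
Proof. by move=> aa'; apply: eq_all => i; rewrite (strict_corner_seq_ext i aa'). Qed.

Lemma H7_flag_ext a a' : {in gtn 7 &, a =2 a'} -> H7_flag a = H7_flag a'.
Proof.
have label_lt7 m i : m \in H7_labellings -> nth 0 m i < 7.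
  have /allP labels : all (all (gtn 7)) H7_labellings by [].
  move=> /labels /allP m_lt7; case: (ltnP i (size m)) => [lt_i|le_i].
    exact/m_lt7/mem_nth.
  by rewrite nth_default.
move=> aa'; congr (_ && _).
  apply: eq_in_has => m m_in.
  by apply: eq_all => i; apply: eq_all => j; rewrite aa' // inE label_lt7.
apply: eq_in_has => v; rewrite mem_iota => /andP [_ lt_v2]; apply: eq_in_all => u.
by rewrite mem_iota => /andP [_ lt_u4]; apply: aa'; rewrite inE; lia.
Qed.

Lemma index_vertex_pairs_lt n i j : n <= 7 -> i < n -> j < n -> i != j ->
  index (minn i j, maxn i j) vertex_pairs < 'C(n, 2).
Proof.
have : all (fun n => all (fun i => all (fun j => (i != j) ==>
  (index (minn i j, maxn i j) vertex_pairs < 'C(n, 2))) (iota 0 n)) (iota 0 n)) (iota 0 8).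
  by vm_compute.
move=> /allP search le_n7 lt_in lt_jn ij.
have in_iota0 k m : k < m -> k \in iota 0 m by rewrite mem_iota.
move: (search n (in_iota0 n 8 le_n7)) => /allP /(_ i (in_iota0 _ _ lt_in)).
by move=> /allP /(_ j (in_iota0 _ _ lt_jn)); rewrite ij.
Qed.

Definition bits_of_graph a : bitseq := [seq a p.1 p.2 | p <- vertex_pairs].

Lemma graph_of_bitsK a : reflexive a -> symmetric a ->
  {in gtn 7 &, graph_of_bits (bits_of_graph a) =2 a}.
Proof.
move=> a_refl a_sym i j lt_i7 lt_j7; rewrite /graph_of_bits.
have [-> | ij] := eqVneq i j; first by rewrite a_refl.
have lt_idx := index_vertex_pairs_lt (leqnn 7) lt_i7 lt_j7 ij.
rewrite (nth_map (0, 0)) // nth_index -?index_mem //=.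
by case: (leqP i j) => _ //; rewrite a_sym.
Qed.

Lemma graph_of_bits_take n l : n <= 7 ->
  {in gtn n &, graph_of_bits (take 'C(n, 2) l) =2 graph_of_bits l}.
Proof.
move=> le_n7 i j lt_in lt_jn; rewrite /graph_of_bits; case: eqVneq => //= ij.
by rewrite nth_take // index_vertex_pairs_lt.
Qed.

Lemma flag_search_sound a : reflexive a -> symmetric a -> a 0 1 ->
  corner_step_prefixb a 4 2 -> corner_step_prefixb a 6 4 -> corner_step_prefixb a 7 6 ->
  H7_flag a.
Proof.
move=> a_refl a_sym a01 step4 step6 step7.
set l := bits_of_graph a; have size_l : size l = 'C(7, 2) by rewrite size_map.
have a_take n : n <= 7 -> {in gtn n &, a =2 graph_of_bits (take 'C(n, 2) l)}.
  move=> le_n7 i j lt_in lt_jn.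
  rewrite graph_of_bits_take // graph_of_bitsK // inE; exact: leq_trans le_n7.
have l0 : nth false l 0 = a 0 1 by rewrite (nth_map (0, 0)).
have := allP flag_search_ok (take 6 l) (mem_bitseqs _).
rewrite size_takel ?size_l // => /(_ erefl).
rewrite nth_take // l0 a01 -(corner_step_prefixb_ext _ (a_take 4 _)) // step4.
move=> /allP /(_ (take 9 (drop 6 l))).
rewrite mem_bitseqs ?size_takel ?size_drop ?size_l // => /(_ isT).
rewrite -takeD -(corner_step_prefixb_ext _ (a_take 6 _)) // step6.
move=> /allP /(_ (drop 15 l)); rewrite mem_bitseqs ?size_drop ?size_l // => /(_ isT).
rewrite catA -takeD cat_take_drop -[l in graph_of_bits l](take_oversize (leqnn _)) size_l.
move=> /=; rewrite -(corner_step_prefixb_ext _ (a_take 7 _)) // step7.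
by rewrite -(H7_flag_ext (a_take 7 _)).
Qed.

End SevenVertexSearch.

Section Flag.
Variables (T : finType) (e : rel T).
Hypotheses (e_refl : reflexive e) (e_sym : symmetric e).
Variables (x0 : T) (s : seq T).
Hypotheses (s_uniq : uniq s) (size_s : size s = 7).

Definition flag_graph i j : bool := e (nth x0 s i) (nth x0 s j).

Definition prefix_set n : {set T} := [set x in take n s].

Lemma mem_prefix_set n i : i < 7 -> (nth x0 s i \in prefix_set n) = (i < n).
Proof. by move=> lt_i7; rewrite inE in_take ?mem_nth ?size_s // index_uniq ?size_s. Qed.

Lemma prefix_setP n x : x \in prefix_set n -> exists2 i, i < minn n 7 & x = nth x0 s i.
Proof.
rewrite inE => x_take; have x_s := mem_take x_take.
exists (index x s); last by rewrite nth_index.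
by rewrite leq_min -(in_take _ x_s) x_take -size_s index_mem.
Qed.

Lemma nbhd_seq_flag n v z : (z \in nbhd_seq flag_graph n v) = (z < n) && flag_graph v z.
Proof. by rewrite mem_filter mem_iota andbC. Qed.

Lemma sub_nbhd_flag n v w : n <= 7 -> v < n -> w < n ->
  (nbhd e (prefix_set n) (nth x0 s v) \subset nbhd e (prefix_set n) (nth x0 s w))
  = sub_nbhd flag_graph n v w.
Proof.
move=> le_n7 lt_vn lt_wn; apply/subsetP/allP => [sub_vw z | sub_vw y].
  rewrite !nbhd_seq_flag => /andP [lt_zn adj_vz]; rewrite lt_zn /=.
  have := sub_vw (nth x0 s z); rewrite !in_nbhd mem_prefix_set ?lt_zn //; last lia.
  by move=> /(_ adj_vz) /andP [].
rewrite !in_nbhd => /andP [y_pre adj_vy].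
have [z lt_z y_eq] := prefix_setP y_pre; subst y; rewrite y_pre /=.
have lt_zn : z < n by move: lt_z; rewrite leq_min => /andP [].
by have := sub_vw z; rewrite !nbhd_seq_flag /flag_graph adj_vy lt_zn => /(_ isT) /andP [].
Qed.

Lemma strict_corner_flag n v : n <= 7 -> v < n ->
  strict_corner e (prefix_set n) (nth x0 s v) = strict_corner_seq flag_graph n v.
Proof.
move=> le_n7 lt_vn; have lt_v7 : v < 7 by apply: leq_trans le_n7.
rewrite /strict_corner /strict_corner_seq mem_prefix_set // lt_vn /=.
apply/existsP/hasP => [[w /andP [w_pre /andP [wv lt_vw]]] | [z]].
  have [z lt_z w_eq] := prefix_setP w_pre; subst w; exists z; first by rewrite mem_iota; lia.
  move: wv lt_vw; rewrite properE !sub_nbhd_flag ?(nth_uniq x0) ?size_s //; lia.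
rewrite mem_iota => /andP [_ lt_zn] /and3P [zv sub_vz not_sub_zv].
exists (nth x0 s z); rewrite mem_prefix_set ?lt_zn ?nth_uniq ?size_s //=; try lia.
by rewrite zv properE !sub_nbhd_flag // sub_vz.
Qed.

Lemma corner_step_flag n m : n <= 7 ->
  corner_step e (prefix_set n) = prefix_set m -> corner_step_prefixb flag_graph n m.
Proof.
move=> le_n7 step_nm; apply/allP => i; rewrite mem_iota => /andP [_ lt_i7].
have := congr1 (fun A : {set T} => nth x0 s i \in A) step_nm.
rewrite /= in_corner_step !mem_prefix_set //.
case: (ltnP i n) => [lt_in|_] /=; last by move=> <-.
by rewrite (strict_corner_flag le_n7 lt_in) => ->.
Qed.

Lemma card_prefix_set7 : #|prefix_set 7| = 7.
Proof. by rewrite cardsE take_oversize ?size_s // (card_uniqP s_uniq). Qed.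

Lemma induced_iso_labelling (m : seq nat) :
  uniq m -> size m = 7 -> all (gtn 7) m ->
  (forall i j : 'I_7, flag_graph (nth 0 m i) (nth 0 m j) = H7 i j) ->
  induced_iso e (prefix_set 7) H7.
Proof.
move=> m_uniq size_m /allP m_lt7 m_iso.
have lt_m7 (i : 'I_7) : nth 0 m i < 7 by apply: m_lt7; rewrite mem_nth ?size_m.
have g_inj : injective (fun i : 'I_7 => nth x0 s (nth 0 m i)).
  move=> i j /eqP; rewrite nth_uniq ?size_s // nth_uniq ?size_m // => /eqP.
  exact: val_inj.
exists (fun i : 'I_7 => nth x0 s (nth 0 m i)); split=> //.
apply/eqP; rewrite eqEcard card_imset // card_ord card_prefix_set7 leqnn andbT.
by apply/subsetP => _ /imsetP [i _ ->]; rewrite mem_prefix_set.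
Qed.

Lemma flag_H7 :
  corner_step e (prefix_set 7) = prefix_set 6 ->
  corner_step e (prefix_set 6) = prefix_set 4 ->
  corner_step e (prefix_set 4) = prefix_set 2 ->
  e (nth x0 s 0) (nth x0 s 1) ->
  induced_iso e (prefix_set 7) H7 /\
  exists2 v, v \in prefix_set 2 & {in prefix_set 4, forall u, e v u}.
Proof.
move=> step7 step6 step4 adj01.
have := flag_search_sound (fun i => e_refl _) (fun i j => e_sym _ _) adj01
  (corner_step_flag (n := 4) isT step4)
  (corner_step_flag (n := 6) isT step6) (corner_step_flag (n := 7) isT step7).
rewrite /H7_flag => /andP [] /hasP [m m_lab /allP iso] /hasP [v v_lt /allP v_dom].
split.
  have /allP labels_ok :
    all (fun m => [&& uniq m, size m == 7 & all (gtn 7) m]) H7_labellings by [].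
  have /and3P [m_uniq /eqP size_m m_lt7] := labels_ok m m_lab.
  apply: (induced_iso_labelling m_uniq size_m m_lt7) => i j.
  have in_iota7 (k : 'I_7) : val k \in iota 0 7 by rewrite mem_iota add0n ltn_ord.
  by have /allP /(_ j (in_iota7 j)) /eqP := iso i (in_iota7 i).
rewrite mem_iota in v_lt; exists (nth x0 s v); first by rewrite mem_prefix_set; lia.
by move=> u /prefix_setP [k lt_k ->]; apply: v_dom; rewrite mem_iota; lia.
Qed.

End Flag.

Section LayerFlag.
Variables (T : finType) (e : rel T).
Hypotheses (e_refl : reflexive e) (e_sym : symmetric e).

Lemma enum_extend (A B : {set T}) (t : seq T) :
  A \subset B -> uniq t -> [set x in t] = A ->
  uniq (t ++ enum (B :\: A)) /\ [set x in t ++ enum (B :\: A)] = B.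
Proof.
move=> sub_AB t_uniq t_A; have in_t x : (x \in t) = (x \in A) by rewrite -t_A inE.
split.
  rewrite cat_uniq t_uniq enum_uniq andbT /=; apply/hasPn => x.
  by rewrite mem_enum !inE in_t => /andP [].
apply/setP => x; rewrite !inE mem_cat mem_enum !inE in_t.
by case: (boolP (x \in A)) => //= /(subsetP sub_AB).
Qed.

Lemma clique_adj (S : {set T}) x y : is_clique e S -> x \in S -> y \in S -> e x y.
Proof.
by move=> /forallP /(_ x) /implyP clique /clique /forallP /(_ y) /implyP.
Qed.

Lemma size_uniq_set (t : seq T) : uniq t -> size t = #|[set x in t]|.
Proof. by move=> t_uniq; rewrite cardsE (card_uniqP t_uniq). Qed.

Lemma layers_H7 i : #|layer e i| = 7 -> #|layer e i.+1| = 6 -> #|layer e i.+2| = 4 ->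
  #|layer e i.+3| = 2 -> is_clique e (layer e i.+3) ->
  induced_iso e (layer e i) H7 /\
  exists2 v, v \in layer e i.+3 & {in layer e i.+2, forall u, e v u}.
Proof.
move=> card0 card1 card2 card3 clique3.
have sub j : layer e j.+1 \subset layer e j by apply: corner_step_sub.
set t3 := enum (layer e i.+3).
have [u3 s3] : uniq t3 /\ [set x in t3] = layer e i.+3.
  by split; [exact: enum_uniq | apply/setP => x; rewrite inE mem_enum].
have [u2 s2] := enum_extend (sub i.+2) u3 s3; set t2 := t3 ++ _ in u2 s2.
have [u1 s1] := enum_extend (sub i.+1) u2 s2; set t1 := t2 ++ _ in u1 s1.
have [u0 s0] := enum_extend (sub i) u1 s1; set t0 := t1 ++ _ in u0 s0.
have size3 : size t3 = 2 by rewrite size_uniq_set // s3.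
have size2 : size t2 = 4 by rewrite size_uniq_set // s2.
have size1 : size t1 = 6 by rewrite size_uniq_set // s1.
have size0 : size t0 = 7 by rewrite size_uniq_set // s0.
have pre3 : prefix_set t0 2 = layer e i.+3.
  by rewrite /prefix_set /t0 /t1 /t2 -!catA take_size_cat.
have pre2 : prefix_set t0 4 = layer e i.+2.
  by rewrite /prefix_set /t0 /t1 -catA take_size_cat.
have pre1 : prefix_set t0 6 = layer e i.+1 by rewrite /prefix_set take_size_cat.
have pre0 : prefix_set t0 7 = layer e i by rewrite /prefix_set take_oversize ?size0.
have /card_gt0P [x0 _] : 0 < #|layer e i.+3| by rewrite card3.
have adj01 : e (nth x0 t0 0) (nth x0 t0 1).
  have in3 k : k < 2 -> nth x0 t0 k \in layer e i.+3.
    by move=> lt_k2; rewrite -pre3 mem_prefix_set // (leq_trans lt_k2).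
  by apply: clique_adj clique3 (in3 0 isT) (in3 1 isT).
have := flag_H7 e_refl e_sym u0 size0 (x0 := x0); rewrite pre0 pre1 pre2 pre3.
by apply; rewrite ?layerS.
Qed.

End LayerFlag.

Theorem theorem4p2 (T : finType) (e : rel T)
  (e_refl : reflexive e) (e_sym : symmetric e) (T_nonempty : 0 < #|T|)
  (alpha : nat) :
  in_H7plus e -> corner_rank e alpha ->
  [/\ induced_iso e (Gk e (alpha - 3)) H7,
      type1 e alpha &
      capture_time e (#|T| - 4)].
Proof.
move=> [k H7k] rank_alpha; have alpha_eq := H7plus_rank H7k rank_alpha; subst alpha.
have [cardT card4 card3 card2 card1] := H7plus_layer_cards H7k rank_alpha.
have [_ [clique4 _]] := rank_alpha.
have [iso [v v_top v_dom]] := layers_H7 e_refl e_sym card1 card2 card3 card4 clique4.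
split=> //; first by split=> //; exists v; rewrite ?Xk_top.
rewrite cardT (_ : k + 7 - 4 = k.+4.-1); last by lia.
exact: (capture_time_type1 e_refl e_sym rank_alpha isT v_top v_dom).
Qed.
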